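(* Let $\varphi$ be a DBI formula, let $(\mathcal{U},\alpha)$ be a pointed action model that is privatized with respect to $\varphi$, and let $(\mathcal{M},w)$ be a pointed Kripke model. If the pointed update of $(\mathcal{M},w)$ with $(\mathcal{U},\alpha)$ is defined, then $\bigl(\mathcal{M}\odot\mathcal{U},(w,\alpha)\bigr)$ is weakly privatized with respect to $\varphi$.
   Context: Agents $\mathcal{A}=\{1,\dots,n\}$, $n>1$; language $\mathcal{L}$: $\varphi ::= p \mid \neg\varphi \mid (\varphi\wedge\varphi)\mid B_i\varphi$. Kripke model $\mathcal{M}=\langle S,R,V\rangle$ (nonempty $S$, $R_i\subseteq S\times S$, $V:\mathit{Prop}\to 2^S$), standard truth. Action model $\mathcal{U}=\langle E,Q,\mathsf{pre}\rangle$ (nonempty $E$, $Q_i\subseteq E\times E$, $\mathsf{pre}:E\to\mathcal{L}$). Frame properties are applied to models via their underlying frames $\langle S,R\rangle$, $\langle E,Q\rangle$. Pointed update of $(\mathcal{M},w)$ with $(\mathcal{U},\alpha)$, defined iff $\mathcal{M},w\vDash\mathsf{pre}(\alpha)$: with $T=\{(x,\beta)\in S\times E\mid\mathcal{M},x\vDash\mathsf{pre}(\beta)\}$, $\mathcal{M}\odot\mathcal{U}=\langle S^{\mathcal U},R^{\mathcal U},V^{\mathcal U}\rangle$ where $S^{\mathcal U}$ is the smallest subset of $T$ containing $(w,\alpha)$ closed under: $(x,\beta)\in S^{\mathcal U}$, $(u,\gamma)\in T$, $xR_iu$, $\beta Q_i\gamma$ imply $(u,\gamma)\in S^{\mathcal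 U}$; $R^{\mathcal U}_i$ relates $(x,\beta),(u,\gamma)\in S^{\mathcal U}$ iff $xR_iu$ and $\beta Q_i\gamma$; $V^{\mathcal U}(p)=\{(x,\beta)\in S^{\mathcal U}\mid x\in V(p)\}$. DBI formulas: $\varphi ::= B_i\xi \mid B_i(\xi\wedge\varphi)\mid(\varphi\wedge\varphi)\mid B_i\varphi$, $\xi$ purely propositional, $i\in\mathcal{A}$. Modal syntactic tree $\mathcal{T}_\varphi$ (out-tree, unlabeled root, other nodes labeled by modalities): $\mathcal{T}_{B_i\xi}$ is a root with one child labeled $B_i$; $\mathcal{T}_{B_i\psi}=\mathcal{T}_{B_i(\xi\wedge\psi)}$ is obtained by labeling the root of $\mathcal{T}_\psi$ with $B_i$ and making it the only child of a new root; $\mathcal{T}_{\psi\wedge\theta}$ is the disjoint union of $\mathcal{T}_\psi,\mathcal{T}_\theta$ with roots identified. $RootP(\varphi)$: paths in $\mathcal{T}_\varphi$ from the root (length $l\ge0$); $\mathsf{agSeq}(\sigma)$: the sequence of agents labeling the non-root nodes of $\sigma$ in order. Clusters: for a frame $\mathcal{F}=\langle W,R\rangle$, $w\in W$ and agent sequence $(i_1,\dots,i_l)$, $C^{i_1,\dots,i_l}_{\mathcal{F},w}=\{u\in W\mid\exists u_2,\dots,u_l:\ wR_{i_1}u_2R_{i_2}\cdots u_lR_{i_l}u\}$, $C^\varepsilon_{\mathcal{F},w}=\{w\}$. $\mathcal{A}^l_{\mathrm{nsr}}$: agent sequences of length $l$ with no two successive equal agents. $(\mathcal{F},w)$ is privatized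 w.r.t. $\varphi$ iff for every $\sigma\in RootP(\varphi)$: $C^{\mathsf{agSeq}(\sigma)}_{\mathcal{F},w}\neq\varnothing$ and $C^{\mathsf{agSeq}(\sigma)}_{\mathcal{F},w}\cap C^{s}_{\mathcal{F},w}=\varnothing$ for every $s\in\bigcup_{l\ge0}\mathcal{A}^l_{\mathrm{nsr}}\setminus\{\mathsf{agSeq}(\sigma)\}$. It is weakly privatized w.r.t. $\varphi$ iff the disjointness condition holds for every $\sigma\in RootP(\varphi)$ (without the nonemptiness requirement). *)

From Stdlib Require List.
From mathcomp Require Import all_boot.

Definition agent (n : nat) := 'I_n.

Inductive form (n : nat) : Type :=
| Var : nat -> form n
| Neg : form n -> form n
| And : form n -> form n -> form n
| Bel : agent n -> form n -> form n.
Arguments Var {n}. Arguments Neg {n}. Arguments And {n}. Arguments Bel {n}.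

Fixpoint propositional {n} (f : form n) : bool :=
  match f with
  | Var _ => true
  | Neg g => propositional g
  | And g h => propositional g && propositional h
  | Bel _ _ => false
  end.

Inductive DBI {n} : form n -> Prop :=
| dbi_B i xi : propositional xi -> DBI (Bel i xi)
| dbi_Bconj i xi phi : propositional xi -> DBI phi -> DBI (Bel i (And xi phi))
| dbi_and phi psi : DBI phi -> DBI psi -> DBI (And phi psi)
| dbi_Bphi i phi : DBI phi -> DBI (Bel i phi).

(* Kripke models (S nonempty is automatic: the theorem gives a point w) *)
Record kmodel (n : nat) := KModel {
  St : Type;
  KR : agent n -> St -> St -> Prop;
  KV : nat -> St -> Prop }.
Arguments KModel {n}. Arguments St {n}. Arguments KR {n}. Arguments KV {n}.

Fixpoint sat {n} (M : kmodel n) (x : St M) (f : form n) : Prop :=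
  match f with
  | Var p => KV M p x
  | Neg g => ~ sat M x g
  | And g h => sat M x g /\ sat M x h
  | Bel i g => forall y, KR M i x y -> sat M y g
  end.

Record amodel (n : nat) := AModel {
  Ev : Type;
  AQ : agent n -> Ev -> Ev -> Prop;
  pre : Ev -> form n }.
Arguments AModel {n}. Arguments Ev {n}. Arguments AQ {n}. Arguments pre {n}.

Record frame (n : nat) := Frame {
  FW : Type;
  FR : agent n -> FW -> FW -> Prop }.
Arguments Frame {n}. Arguments FW {n}. Arguments FR {n}.

Definition kframe {n} (M : kmodel n) : frame n := Frame (St M) (KR M).
Definition aframe {n} (U : amodel n) : frame n := Frame (Ev U) (AQ U).

Inductive SU {n} (M : kmodel n) (U : amodel n) (w : St M) (a : Ev U)
  : St M -> Ev U -> Prop :=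
| SU_base : sat M w (pre U a) -> SU M U w a w a
| SU_step x b u c i : SU M U w a x b -> sat M u (pre U c) ->
    KR M i x u -> AQ U i b c -> SU M U w a u c.

Definition upd_state {n} (M : kmodel n) (U : amodel n) (w : St M) (a : Ev U) :=
  { p : St M * Ev U | SU M U w a p.1 p.2 }.

Definition update {n} (M : kmodel n) (U : amodel n) (w : St M) (a : Ev U)
  : kmodel n :=
  KModel (upd_state M U w a)
    (fun i p q => KR M i (proj1_sig p).1 (proj1_sig q).1 /\
                  AQ U i (proj1_sig p).2 (proj1_sig q).2)
    (fun p x => KV M p (proj1_sig x).1).

Definition upd_point {n} (M : kmodel n) (U : amodel n) (w : St M) (a : Ev U)
  (H : sat M w (pre U a)) : St (update M U w a) :=
  exist (fun p : St M * Ev U => SU M U w a p.1 p.2) (w, a) (SU_base M U w a H).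

(* Modal syntactic trees: unlabeled root; each child edge carries the agent
   labeling the child node. *)
Inductive mtree (n : nat) : Type :=
| Node : list (agent n * mtree n) -> mtree n.
Arguments Node {n}.

Definition children {n} (t : mtree n) := let: Node c := t in c.

Fixpoint mtree_of {n} (f : form n) : mtree n :=
  match f with
  | Bel i psi =>
      if propositional psi then Node [:: (i, Node [::])]
      else match psi with
           | And xi phi =>
               if propositional xi then Node [:: (i, mtree_of phi)]
               else Node [:: (i, mtree_of psi)]
           | _ => Node [:: (i, mtree_of psi)]
           end
  | And phi psi => Node (children (mtree_of phi) ++ children (mtree_of psi))
  | _ => Node [::] (* not a DBI formula; irrelevant *)
  end.

(* [rootpath t s] iff s = agSeq(sigma) for some path sigma in t starting at
   the root (length l >= 0). *)
Inductive rootpath {n} : mtree n -> list (agent n) -> Prop :=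
| rp_nil t : rootpath t [::]
| rp_cons ch i t s : List.In (i, t) ch -> rootpath t s -> rootpath (Node ch) (i :: s).

Fixpoint cluster {n} (F : frame n) (s : list (agent n)) (w u : FW F) : Prop :=
  match s with
  | [::] => u = w
  | i :: s' => exists v, FR F i w v /\ cluster F s' v u
  end.

Fixpoint nsr {n} (s : list (agent n)) : Prop :=
  match s with
  | i :: ((j :: _) as s') => i <> j /\ nsr s'
  | _ => True
  end.

Definition disjoint_cond {n} (F : frame n) (w : FW F) (s : list (agent n)) :=
  forall s', nsr s' -> s' <> s ->
    forall u, ~ (cluster F s w u /\ cluster F s' w u).

Definition privatized {n} (F : frame n) (w : FW F) (phi : form n) : Prop :=
  forall s, rootpath (mtree_of phi) s ->
    (exists u, cluster F s w u) /\ disjoint_cond F w s.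

Definition weakly_privatized {n} (F : frame n) (w : FW F) (phi : form n) : Prop :=
  forall s, rootpath (mtree_of phi) s -> disjoint_cond F w s.

From mathcomp Require Import all_boot.

(* The projection (x, b) |-> b is a frame homomorphism from the updated model
   to the action model, sending (w, a) to a.  Homomorphisms map clusters into
   clusters, so a common point of two clusters of the update yields a common
   point of the corresponding clusters of the action model, which
   privatization forbids.  Nonemptiness of clusters does not transfer, hence
   only weak privatization. *)

Definition frame_hom {n} (F G : frame n) (f : FW F -> FW G) : Prop :=
  forall i x y, FR F i x y -> FR G i (f x) (f y).

Section FrameHom.

Context {n : nat} {F G : frame n} {f : FW F -> FW G}.
Hypothesis f_hom : frame_hom F G f.

Lemma cluster_hom s x y : cluster F s x y -> cluster G s (f x) (f y).
Proof.
elim: s x => [|i s IHs] x /=; first by move->.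
by case=> v [xv vy]; exists (f v); split; [exact: f_hom | exact: IHs].
Qed.

Lemma disjoint_cond_hom w s : disjoint_cond G (f w) s -> disjoint_cond F w s.
Proof.
move=> disjG s' nsr_s' s'_neq u [in_s in_s'].
by apply: (disjG s' nsr_s' s'_neq (f u)); split; exact: cluster_hom.
Qed.

Lemma weakly_privatized_hom w phi :
  weakly_privatized G (f w) phi -> weakly_privatized F w phi.
Proof. by move=> wpG s path_s; apply/disjoint_cond_hom/wpG. Qed.

End FrameHom.

Lemma privatized_weakly {n} (F : frame n) w phi :
  privatized F w phi -> weakly_privatized F w phi.
Proof. by move=> priv s path_s; case: (priv s path_s). Qed.

Definition upd_event {n} (M : kmodel n) (U : amodel n) w a
  (p : St (update M U w a)) : Ev U := (proj1_sig p).2.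

Lemma upd_event_hom {n} (M : kmodel n) (U : amodel n) w a :
  frame_hom (kframe (update M U w a)) (aframe U) (upd_event M U w a).
Proof. by move=> i p q []. Qed.

Theorem theorem9 (n : nat) (Hn : 1 < n) (phi : form n) (Hphi : DBI phi)
  (U : amodel n) (a : Ev U) (M : kmodel n) (w : St M)
  (Hpriv : privatized (aframe U) a phi)
  (Hdef : sat M w (pre U a)) :
  weakly_privatized (kframe (update M U w a)) (upd_point M U w a Hdef) phi.
Proof.
apply: (weakly_privatized_hom (upd_event_hom M U w a)).
exact: privatized_weakly.
Qed.
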